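(* Let $f(X)=\sum_{i=0}^{h-1}f_iX^{q^i}$ be an invertible $\mathbb F_q$-linearised polynomial over $\mathbb F_{q^h}$ with exactly two nonzero coefficients, and suppose that $f$ is not semi-linear over any subfield $\mathbb F_{q^s}$ of $\mathbb F_{q^h}$ with $\mathbb F_{q^s}\supsetneq\mathbb F_q$. Then all coefficients of $f^{-1}(X)=\sum_{i=0}^{h-1}\overline f_iX^{q^i}$ are nonzero.
   Context: An $\mathbb F_q$-linearised polynomial over $\mathbb F_{q^h}$ is $\sum_{l=0}^{h-1}a_lX^{q^l}$ with $a_l\in\mathbb F_{q^h}$, viewed as a map of $\mathbb F_{q^h}$; invertible means bijective, and its inverse map is again such a polynomial. For a subfield $K$ of $\mathbb F_{q^h}$, $f$ is $K$-semi-linear if there is a field automorphism $\sigma$ of $\mathbb F_{q^h}$ with $f(\alpha x)=\alpha^\sigma f(x)$ for all $\alpha\in K$, $x\in\mathbb F_{q^h}$. *)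

From HB Require Import structures.
From mathcomp Require Import all_boot all_order all_algebra all_field.
Set Implicit Arguments. Unset Strict Implicit. Unset Printing Implicit Defensive.
Import GRing.Theory.
Local Open Scope ring_scope.

Definition linpoly (L : finFieldType) (q h : nat) (a : 'I_h -> L) (x : L) : L :=
  \sum_(l < h) a l * x ^+ (q ^ l)%N.

Definition subfield_qs (L : finFieldType) (q s : nat) : pred L :=
  fun alpha => alpha ^+ (q ^ s)%N == alpha.

Definition semilinear_over (L : finFieldType) (q h : nat) (a : 'I_h -> L) (s : nat) : Prop :=
  exists sigma : {rmorphism L -> L}, bijective sigma /\
    forall alpha x, alpha \in subfield_qs q s ->
      linpoly q a (alpha * x) = sigma alpha * linpoly q a x.

(* Write f = a X^(q^i) + b X^(q^j) and k = j - i, indices taken modulo h.  If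
   d = gcd(k, h) > 1, then f is F_(q^d)-semilinear with respect to x |-> x^(q^i);
   hence k is a unit modulo h.  Comparing coefficients in e(f(X)) = X, where e is
   the inverse of f, gives for every u modulo h
     e_(u+k) a^(q^(u+k)) + e_u b^(q^u) = [u = -j],
   so away from u = -j the coefficient e_(u+k) vanishes exactly when e_u does.
   As k generates Z/hZ, either every coefficient of e vanishes or none does, and
   e = 0 is impossible. *)

From HB Require Import structures.
From mathcomp Require Import all_boot all_order all_algebra all_field.
Set Implicit Arguments.
Unset Strict Implicit.
Unset Printing Implicit Defensive.

Import GRing.Theory.
Local Open Scope ring_scope.

Definition expr_pchar {R : comNzRingType} {m : nat} of [pchar R].-nat m :=
  fun x : R => x ^+ m.

Section ExprPchar.
Variables (R : comNzRingType) (m : nat) (mP : [pchar R].-nat m).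

Fact expr_pchar_is_nmod_morphism : nmod_morphism (expr_pchar mP).
Proof.
split=> [|x y]; rewrite /expr_pchar ?exprDn_pchar //.
by case/andP: mP => m_gt0 _; rewrite expr0n eqn0Ngt m_gt0.
Qed.

Fact expr_pchar_is_monoid_morphism : monoid_morphism (expr_pchar mP).
Proof. by split=> [|x y]; rewrite /expr_pchar ?expr1n ?exprMn. Qed.

HB.instance Definition _ :=
  GRing.isNmodMorphism.Build R R (expr_pchar mP) expr_pchar_is_nmod_morphism.
HB.instance Definition _ :=
  GRing.isMonoidMorphism.Build R R (expr_pchar mP) expr_pchar_is_monoid_morphism.

End ExprPchar.

Section ZpTranslation.
Variable n : nat.
Local Notation h := n.+1.

Lemma Zp_mulrn_eq0 (k : 'I_h) t : coprime k h -> (k *+ t == 0) = (h %| t)%N.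
Proof.
by move=> cop_k; rewrite Zp_mulrn -val_eqE /= -/(dvdn h _) Gauss_dvdr // coprime_sym.
Qed.

Lemma Zp_translation_constant (P : pred 'I_h) (k c : 'I_h) : coprime k h ->
  (forall u, u != c -> P (u + k) = P u) -> forall u, P u = P c.
Proof.
move=> cop_k Pk.
have orbit t : (t < h)%N -> P (c + k *+ t.+1) = P (c + k).
  elim: t => [|t IHt] t_lt; first by rewrite mulr1n.
  rewrite mulrSr addrA (Pk (c + k *+ t.+1)) ?IHt ?(ltnW t_lt) //.
  rewrite -[X in _ != X]addr0 (inj_eq (addrI c)) Zp_mulrn_eq0 //.
  by apply/negP => /(dvdn_leq (ltn0Sn t)); rewrite leqNgt t_lt.
have k_h : k *+ h = 0 by apply/eqP; rewrite Zp_mulrn_eq0.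
have Pc : P c = P (c + k) by rewrite -{1}[c]addr0 -k_h orbit.
have onto u : u = c + k *+ Zp_mul (Zp_inv k) (u - c).
  have -> (w : 'I_h) : k *+ w = Zp_mul k w by apply: val_inj; rewrite Zp_mulrn.
  rewrite Zp_mulA Zp_mulzV 1?coprime_sym //.
  by rewrite Zp_mul1z addrC subrK.
move=> u; rewrite (onto u); case: (Zp_mul _ _) => [[|t] t_lt].
  by rewrite mulr0n addr0.
by rewrite /= orbit 1?ltnW // Pc.
Qed.

End ZpTranslation.

Section FiniteFieldPowers.
Variables (L : finFieldType) (q n : nat).
(* Coefficients are indexed by 'I_n.+1, which carries the additive group Z/hZ. *)
Local Notation h := n.+1.
Hypothesis cardL : #|L| = (q ^ h)%N.

Lemma pchar_nat_card : [pchar L].-nat #|L|.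
Proof.
have [p _ chp] := finPcharP L.
rewrite (eq_pnat _ (pcharf_eq chp)) -cardsT.
exact: (pprimeChar_pgroup chp).
Qed.

Lemma pchar_nat_qpow m : [pchar L].-nat (q ^ m)%N.
Proof.
rewrite pnatX; apply/orP; left.
by apply: pnat_dvd pchar_nat_card; rewrite cardL dvdn_exp.
Qed.

Lemma expr_qpow_sum m I (r : seq I) (P : pred I) (F : I -> L) :
  (\sum_(i <- r | P i) F i) ^+ (q ^ m) = \sum_(i <- r | P i) F i ^+ (q ^ m).
Proof. exact: (rmorph_sum (expr_pchar (pchar_nat_qpow m))). Qed.

Lemma expr_qpow_mod m (x : L) : x ^+ (q ^ m) = x ^+ (q ^ (m %% h)).
Proof.
have expr_card_pow c : x ^+ (#|L| ^ c) = x.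
  by elim: c => [|c IHc]; rewrite ?expr1 // expnS exprM expf_card.
by rewrite {1}(divn_eq m h) expnD exprM mulnC expnM -cardL expr_card_pow.
Qed.

Lemma expr_qpowZpD (u v : 'I_h) (x : L) :
  x ^+ (q ^ (u + v)%R) = x ^+ (q ^ u) ^+ (q ^ v).
Proof. by rewrite -exprM -expnD [RHS]expr_qpow_mod. Qed.

Hypothesis q_gt1 : (1 < q)%N.

Lemma linpoly_coef_inj (c d : 'I_h -> L) : linpoly q c =1 linpoly q d -> c =1 d.
Proof.
move=> eq_cd l; apply/eqP; rewrite -subr_eq0; apply/eqP.
pose P : {poly L} := \sum_(m < h) (c m - d m) *: 'X^(q ^ m).
have rootP x : root P x.
  rewrite /root horner_sum.
  under eq_bigr do rewrite hornerZ hornerXn mulrBl.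
  by rewrite sumrB -/(linpoly q c x) -/(linpoly q d x) eq_cd subrr.
have sizeP : (size P <= #|L|)%N.
  apply: leq_trans (size_sum _ _ _) _; apply/bigmax_leqP => m _.
  apply: leq_trans (size_scale_leq _ _) _.
  by rewrite size_polyXn cardL ltn_exp2l.
have P0 : P = 0.
  apply: (roots_geq_poly_eq0 (rs := enum L)); rewrite ?enum_uniq -?cardE //.
  by apply/allP.
have := congr1 (fun p : {poly L} => p`_(q ^ l)) P0.
rewrite /= coef0 coef_sumMXn (eq_bigl (pred1 l)) ?big_pred1_eq //.
by move=> m; rewrite eqn_exp2l.
Qed.

Definition lincomp (e f : 'I_h -> L) (r : 'I_h) : L :=
  \sum_(m < h) e (r - m) * f m ^+ (q ^ (r - m)%R).

Lemma linpoly_comp e f x : linpoly q e (linpoly q f x) = linpoly q (lincomp e f) x.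
Proof.
rewrite /linpoly /lincomp.
under eq_bigr do rewrite expr_qpow_sum mulr_sumr.
under [RHS]eq_bigr do rewrite mulr_suml.
rewrite [RHS]exchange_big [LHS]exchange_big; apply: eq_bigr => m _.
rewrite [RHS](reindex_inj (addIr m)); apply: eq_bigr => l _.
by rewrite addrK exprMn -expr_qpowZpD (addrC m) mulrA.
Qed.

Lemma lincomp_left_inverse e f : (forall x, linpoly q e (linpoly q f x) = x) ->
  forall r, lincomp e f r = (r == 0)%:R.
Proof.
move=> ef; apply: linpoly_coef_inj => x.
rewrite -linpoly_comp ef /linpoly (bigD1 0) //= big1 => [|r r_neq0].
  by rewrite mul1r expr1 addr0.
by rewrite (negbTE r_neq0) mul0r.
Qed.

Section Binomial.
Variables (f : 'I_h -> L) (i j : 'I_h).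
Hypotheses (neq_ij : i != j) (supp_f : [set m | f m != 0] = [set i; j]).

Lemma binomial_coef_neq0 : (f i != 0) && (f j != 0).
Proof. by rewrite -!(in_set (fun m => f m != 0)) supp_f !inE !eqxx orbT. Qed.

Lemma big_binomial_supp (F : 'I_h -> L) :
  (forall m, f m = 0 -> F m = 0) -> \sum_(m < h) F m = F i + F j.
Proof.
move=> F0; rewrite (bigD1 i) // (bigD1 j) 1?eq_sym //= addrA big1 ?addr0 //.
move=> m /andP[m_i m_j].
apply/F0/eqP; apply: contraNT m_j.
by rewrite -(in_set (fun m => f m != 0)) supp_f !inE (negbTE m_i).
Qed.

Lemma linpoly_binomial x : linpoly q f x = f i * x ^+ (q ^ i) + f j * x ^+ (q ^ j).
Proof. by rewrite /linpoly big_binomial_supp // => m ->; rewrite mul0r. Qed.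

Lemma lincomp_binomial e r : lincomp e f r =
  e (r - i) * f i ^+ (q ^ (r - i)%R) + e (r - j) * f j ^+ (q ^ (r - j)%R).
Proof.
rewrite /lincomp big_binomial_supp // => m ->.
by rewrite expr0n expn_eq0 gtn_eqF ?(ltnW q_gt1) //= mulr0.
Qed.

Lemma binomial_semilinear s : (s %| (j - i)%R)%N -> semilinear_over q f s.
Proof.
move=> s_ji; exists (expr_pchar (pchar_nat_qpow i)); split.
  by apply: injF_bij; apply: fmorph_inj.
move=> a x /eqP a_s; rewrite /= /expr_pchar !linpoly_binomial.
have a_fix c : a ^+ (q ^ (s * c)) = a.
  by elim: c => [|c IHc]; rewrite ?muln0 ?expr1 // mulnS expnD exprM a_s IHc.
have a_ij : a ^+ (q ^ j) = a ^+ (q ^ i).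
  by rewrite -{1}(subrK i j) expr_qpowZpD -(divnK s_ji) mulnC a_fix.
by rewrite !exprMn a_ij mulrDr (mulrCA (f i)) (mulrCA (f j)).
Qed.

Lemma binomial_gap_coprime :
  (forall s, (s %| h)%N -> (1 < s)%N -> ~ semilinear_over q f s) ->
  coprime (j - i)%R h.
Proof.
move=> not_semilinear; rewrite /coprime eqn_leq gcdn_gt0 orbT andbT leqNgt.
apply/negP => gcd_gt1; apply: (not_semilinear _ (dvdn_gcdr _ _) gcd_gt1).
exact: binomial_semilinear (dvdn_gcdl _ _).
Qed.

Lemma binomial_inverse_coef_neq0 (e : 'I_h -> L) : coprime (j - i)%R h ->
  (forall x, linpoly q e (linpoly q f x) = x) -> forall l, e l != 0.
Proof.
move=> cop_ji ef.
have /andP[fi_neq0 fj_neq0] := binomial_coef_neq0.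
have eq0_mulX (y z : L) m : z != 0 -> (y * z ^+ m == 0) = (y == 0).
  by move=> z_neq0; rewrite mulf_eq0 expf_eq0 (negbTE z_neq0) andbF orbF.
have zero_shift u : u != - j -> (e (u + (j - i)) == 0) = (e u == 0).
  move=> u_neq; have := lincomp_left_inverse ef (u + j).
  rewrite lincomp_binomial addrK -addrA (_ : (u + j == 0) = false); last first.
    by apply/negbTE; rewrite addr_eq0.
  move/eqP; rewrite addr_eq0 => /eqP rec_u.
  rewrite -(eq0_mulX _ (f i) (q ^ (u + (j - i))%R)%N) //.
  by rewrite rec_u oppr_eq0 eq0_mulX.
have const u : (e u == 0) = (e (- j) == 0).
  exact: (Zp_translation_constant (P := fun u => e u == 0) cop_ji zero_shift).
move=> l; apply/negP => /eqP e_l0.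
have e0 u : e u = 0 by apply/eqP; rewrite const -(const l) e_l0.
have := ef 1; rewrite /linpoly big1 => [/eqP|m _]; last by rewrite e0 mul0r.
by rewrite eq_sym oner_eq0.
Qed.

End Binomial.
End FiniteFieldPowers.

Theorem lemma5p14 (q h : nat) (L : finFieldType)
  (hq : (1 < q)%N) (hh : (0 < h)%N) (hL : #|L| = (q ^ h)%N)
  (f : 'I_h -> L)
  (hinv : bijective (linpoly q f))
  (htwo : #|[set i | f i != 0]| = 2%N)
  (hns : forall s : nat, (s %| h)%N -> (1 < s)%N -> ~ semilinear_over q f s) :
  forall finv : 'I_h -> L,
    (forall x : L, linpoly q finv (linpoly q f x) = x) ->
    forall i : 'I_h, finv i != 0.
Proof.
case: h hh hL f hinv htwo hns => // n _ cardL f _ card_supp not_semilinear e ef.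
have /cards2P [i [j [neq_ij supp_f]]] : #|[set l | f l != 0]| == 2%N.
  by rewrite card_supp.
apply: (binomial_inverse_coef_neq0 cardL hq neq_ij supp_f _ ef).
by apply: (binomial_gap_coprime cardL neq_ij supp_f).
Qed.
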